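(* Let $b>0$, and let $\psi$ be the function defined in the context, with $\psi^{(k)}$ its $k$-th derivative. For every $k\in\mathbb{N}\cup\{0\}$ there exists a unique solution on $(c,\infty)$ of the equation $(x-c)\psi^{(k+1)}(x)-\psi^{(k)}(x)=0$. In particular, there exists a unique $x_0>c$ solving $(x-c)\psi'(x)-\psi(x)=0$ and a unique $x_\infty>c$ solving $(x-c)\psi''(x)-\psi'(x)=0$.
   Context: Constants: $a\in\mathbb{R}$, $b>0$, $\sigma>0$, $\rho>0$, $c>0$. For $\beta<0$, let $D_\beta(x)=\frac{e^{-x^2/4}}{\Gamma(-\beta)}\int_0^\infty t^{-\beta-1}e^{-t^2/2-xt}\,dt$ be the parabolic cylinder function of order $\beta$, and define $$\psi(x)=e^{\frac{(bx-a)^2}{2\sigma^2 b}}D_{-\rho/b}\Big(-\frac{bx-a}{\sigma b}\sqrt{2b}\Big),\qquad x\in\mathbb{R},$$ which is the positive, strictly increasing fundamental solution of $\frac12\sigma^2u''+(a-bx)u'-\rho u=0$. *)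

From Stdlib Require Import Reals.
From Coquelicot Require Import Coquelicot.
Open Scope R_scope.

Definition Gamma_fun (s : R) : R :=
  RInt_gen (fun t => Rpower t (s - 1) * exp (- t))
           (at_right 0) (Rbar_locally p_infty).

(* Parabolic cylinder function of order beta < 0:
   D_beta(x) = e^{-x^2/4}/Gamma(-beta) * int_0^oo t^{-beta-1} e^{-t^2/2 - x t} dt *)
Definition D_pc (beta x : R) : R :=
  exp (- x ^ 2 / 4) / Gamma_fun (- beta) *
  RInt_gen (fun t => Rpower t (- beta - 1) * exp (- t ^ 2 / 2 - x * t))
           (at_right 0) (Rbar_locally p_infty).

Definition psi (a b sigma rho : R) (x : R) : R :=
  exp ((b * x - a) ^ 2 / (2 * sigma ^ 2 * b)) *
  D_pc (- rho / b) (- (b * x - a) / (sigma * b) * sqrt (2 * b)).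

From Stdlib Require Import Reals Lra Psatz Classical_Prop.
From Coquelicot Require Import Coquelicot.
Open Scope R_scope.

(* The Gaussian factors cancel, so that up to the constant 1/Gamma(rho/b) > 0,
   psi(x) = int_0^oo t^(rho/b - 1) exp(- t^2/2 - lam (a/b - x) t) dt  with  lam = sqrt(2b)/sigma.
   Differentiating under the integral sign, which the bound |e^(-ht) - 1 + ht| <= h^2 t^2 e^t
   (|h| <= 1) justifies, multiplies the integrand by lam t; hence every psi^(n) is a convergent
   integral of the same kind, and positive. For such a function,
   g(x) = (x - c) psi^(k+1)(x) - psi^(k)(x) has g(c) < 0 and g'(x) = (x - c) psi^(k+2)(x) > 0 on
   (c, oo), with g' bounded below beyond c + 1; so g has exactly one zero there, whatever the
   sign of c. *)

Lemma exp_le_exp_of_le x y : x <= y -> exp x <= exp y.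
Proof. intros [H | ->]; [left; exact (exp_increasing _ _ H) | apply Rle_refl]. Qed.

Lemma ln_le_sub_1 t : 0 < t -> ln t <= t - 1.
Proof. intros Ht. pose proof (exp_ineq1_le (ln t)) as H. rewrite exp_ln in H; lra. Qed.

Lemma ln_nonneg t : 1 <= t -> 0 <= ln t.
Proof. intros Ht. rewrite <- ln_1. apply ln_le; lra. Qed.

Lemma ln_le_2_sqrt t : 0 < t -> ln t <= 2 * sqrt t.
Proof.
  intros Ht.
  assert (Hs : 0 < sqrt t) by (apply sqrt_lt_R0, Ht).
  rewrite <- (sqrt_sqrt t) at 1 by lra.
  rewrite ln_mult by exact Hs.
  pose proof (ln_le_sub_1 _ Hs). lra.
Qed.

Lemma Rpower_pos t p : 0 < Rpower t p.
Proof. apply exp_pos. Qed.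

Lemma continuous_Rpower p t : 0 < t -> continuous (fun x => Rpower x p) t.
Proof.
  intros Ht. apply (ex_derive_continuous (fun x => Rpower x p)). exists (p * Rpower t (p - 1)).
  apply is_derive_Reals, derivable_pt_lim_power, Ht.
Qed.

Lemma eventually_inside_half_line a0 b0 : 0 < a0 ->
  filter_prod (at_right 0) (Rbar_locally p_infty)
    (fun ab => 0 < fst ab <= a0 /\ b0 <= snd ab).
Proof.
  intros Ha0. apply (Filter_prod _ _ _ (fun a => 0 < a <= a0) (fun b => b0 <= b)).
  - exists (mkposreal a0 Ha0). intros a Ha Ha_pos. simpl in *.
    unfold ball in Ha; simpl in Ha; unfold AbsRing_ball, abs, minus, plus, opp in Ha; simpl in Ha.
    apply Rabs_def2 in Ha. lra.
  - exists b0. intros b Hb. lra.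
  - intros a b Ha Hb. simpl. tauto.
Qed.

Section PositiveImproperIntegral.
Variable f : R -> R.
Hypothesis f_cont : forall t, 0 < t -> continuous f t.
Hypothesis f_pos : forall t, 0 < t -> 0 < f t.

Lemma ex_RInt_half_line a b : 0 < a -> 0 < b -> ex_RInt f a b.
Proof.
  intros Ha Hb. apply (ex_RInt_continuous (V := R_CompleteNormedModule)). intros t Ht. apply f_cont.
  assert (0 < Rmin a b) by (apply Rmin_case; lra). lra.
Qed.

Lemma RInt_le_RInt_larger a' a b b' : 0 < a' -> a' <= a -> a <= b -> b <= b' ->
  RInt f a b <= RInt f a' b'.
Proof.
  intros Ha' Ha'a Hab Hbb'.
  assert (Hnonneg : forall u v, 0 < u -> u <= v -> 0 <= RInt f u v).
  { intros u v Hu Huv. apply RInt_ge_0; [exact Huv | apply ex_RInt_half_line; lra |].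
    intros t Ht. left. apply f_pos. lra. }
  rewrite <- (RInt_Chasles (V := R_CompleteNormedModule) f a' a b')
    by (apply ex_RInt_half_line; lra).
  rewrite <- (RInt_Chasles (V := R_CompleteNormedModule) f a b b')
    by (apply ex_RInt_half_line; lra).
  pose proof (Hnonneg a' a Ha' Ha'a). pose proof (Hnonneg b b' ltac:(lra) Hbb').
  unfold plus; simpl. lra.
Qed.

(* The improper integral is the supremum of the integrals over compact subintervals. *)
Lemma improper_integral_of_bounded M :
  (forall a b, 0 < a -> a <= b -> RInt f a b <= M) ->
  exists l, is_RInt_gen f (at_right 0) (Rbar_locally p_infty) l /\ 0 < l.
Proof.
  intros HM.
  set (E := fun y => exists a b, 0 < a /\ a <= b /\ y = RInt f a b).
  assert (HE : E (RInt f 1 2)) by (exists 1, 2; repeat split; lra).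
  destruct (completeness E) as [l [Hub Hlub]].
  { exists M. intros y (a & b & Ha & Hab & ->). apply HM; assumption. }
  { exists (RInt f 1 2). exact HE. }
  exists l. split.
  2:{ apply Rlt_le_trans with (RInt f 1 2); [| apply Hub, HE].
      apply RInt_gt_0; [lra | intros t Ht; apply f_pos; lra | intros t Ht; apply f_cont; lra]. }
  intros P [eps HP].
  assert (Hnear : exists a0 b0, 0 < a0 /\ a0 <= b0 /\ l - eps < RInt f a0 b0).
  { apply NNPP. intros Hfar.
    assert (l <= l - eps).
    { apply Hlub. intros y (a & b & Ha & Hab & ->).
      apply Rnot_lt_le. intros Hlt. apply Hfar. exists a, b. auto. }
    pose proof (cond_pos eps). lra. }
  destruct Hnear as (a0 & b0 & Ha0 & Hab0 & Hl).
  unfold filtermapi.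
  apply (filter_imp (fun ab => 0 < fst ab <= a0 /\ b0 <= snd ab));
    [| apply eventually_inside_half_line, Ha0].
  intros [a b] [[Ha Haa0] Hb]. simpl in *. exists (RInt f a b). split.
  - apply (RInt_correct (V := R_CompleteNormedModule)), ex_RInt_half_line; lra.
  - apply HP. unfold ball; simpl; unfold AbsRing_ball, abs, minus, plus, opp; simpl.
    assert (RInt f a b <= l) by (apply Hub; exists a, b; repeat split; lra).
    assert (RInt f a0 b0 <= RInt f a b) by (apply RInt_le_RInt_larger; lra).
    apply Rabs_def1; lra.
Qed.

End PositiveImproperIntegral.

Lemma RInt_Rpower_le p a T : -1 < p -> 0 < a -> a <= T ->
  RInt (fun t => Rpower t p) a T <= Rpower T (p + 1) / (p + 1).
Proof.
  intros hp Ha HaT.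
  assert (HF : is_RInt (fun t => Rpower t p) a T
                 (minus (/ (p + 1) * Rpower T (p + 1)) (/ (p + 1) * Rpower a (p + 1)))).
  { apply (is_RInt_derive (V := R_CompleteNormedModule) (fun t => / (p + 1) * Rpower t (p + 1)));
      intros x Hx; rewrite Rmin_left in Hx by lra.
    - apply is_derive_Reals.
      replace (Rpower x p) with (/ (p + 1) * ((p + 1) * Rpower x (p + 1 - 1)))
        by (replace (p + 1 - 1) with p by ring; field; lra).
      apply (derivable_pt_lim_scal (fun t => Rpower t (p + 1))), derivable_pt_lim_power. lra.
    - apply continuous_Rpower. lra. }
  rewrite (is_RInt_unique _ _ _ _ HF). unfold minus, plus, opp; simpl.
  pose proof (Rpower_pos a (p + 1)).
  assert (0 < / (p + 1)) by (apply Rinv_0_lt_compat; lra).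
  unfold Rdiv. nra.
Qed.

Lemma RInt_exp_half_le T b : 0 <= T -> T <= b -> RInt (fun t => exp (- t / 2)) T b <= 2.
Proof.
  intros HT HTb.
  assert (HF : is_RInt (fun t => exp (- t / 2)) T b
                 (minus (-2 * exp (- b / 2)) (-2 * exp (- T / 2)))).
  { apply (is_RInt_derive (V := R_CompleteNormedModule) (fun t => -2 * exp (- t / 2)));
      intros x Hx.
    - auto_derive; [exact I |]. unfold Rdiv.
      change (-2 * (- (1) * / 2 * exp (- x * / 2)) = exp (- x * / 2)). field.
    - apply (ex_derive_continuous (fun t => exp (- t / 2))). auto_derive. exact I. }
  rewrite (is_RInt_unique _ _ _ _ HF). unfold minus, plus, opp; simpl.
  pose proof (exp_pos (- b / 2)).
  assert (exp (- T / 2) <= 1) by (rewrite <- exp_0; apply exp_le_exp_of_le; lra).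
  lra.
Qed.

Section PowerTimesExp.
Variables (p A T : R) (phi : R -> R).
Hypothesis hp : -1 < p.
Hypothesis phi_cont : forall t, continuous phi t.
Hypothesis phi_le : forall t, 0 < t -> phi t <= A.
Hypothesis hT : 0 <= T.
Hypothesis phi_tail : forall t, T <= t -> 0 < t -> p * ln t + phi t <= - t / 2.

Lemma continuous_power_exp t : 0 < t -> continuous (fun t => Rpower t p * exp (phi t)) t.
Proof.
  intros Ht. apply (continuous_mult (fun t => Rpower t p) (fun t => exp (phi t))).
  - apply continuous_Rpower, Ht.
  - apply (continuous_comp phi exp), continuous_exp. apply phi_cont.
Qed.

(* [t^p e^A] is integrable at [0] and [e^(-t/2)] at [+oo]; split at [T + 1]. *)
Lemma RInt_power_exp_le a b : 0 < a -> a <= b ->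
  RInt (fun t => Rpower t p * exp (phi t)) a b <= exp A * (Rpower (T + 1) (p + 1) / (p + 1)) + 2.
Proof.
  intros Ha Hab.
  set (f := fun t => Rpower t p * exp (phi t)).
  set (T' := T + 1). set (a' := Rmin a T'). set (b' := Rmax b T').
  assert (Ha' : 0 < a') by (apply Rmin_glb_lt; unfold T'; lra).
  assert (a' <= a) by apply Rmin_l. assert (b <= b') by apply Rmax_l.
  assert (a' <= T') by apply Rmin_r. assert (T' <= b') by apply Rmax_r.
  assert (Hex : forall u v, 0 < u -> 0 < v -> ex_RInt f u v).
  { intros. apply ex_RInt_half_line; [exact continuous_power_exp | lra | lra]. }
  apply Rle_trans with (RInt f a' b').
  { apply RInt_le_RInt_larger; try lra; [exact continuous_power_exp |].
    intros t Ht. apply Rmult_lt_0_compat; [apply Rpower_pos | apply exp_pos]. }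
  rewrite <- (RInt_Chasles (V := R_CompleteNormedModule) f a' T' b') by (apply Hex; lra).
  unfold plus; simpl. apply Rplus_le_compat.
  - apply Rle_trans with (exp A * RInt (fun t => Rpower t p) a' T').
    2:{ apply Rmult_le_compat_l; [left; apply exp_pos | apply RInt_Rpower_le; lra]. }
    assert (Hpow : ex_RInt (fun t => Rpower t p) a' T').
    { apply (ex_RInt_continuous (V := R_CompleteNormedModule)). intros t Ht.
      rewrite Rmin_left, Rmax_right in Ht by lra. apply continuous_Rpower. lra. }
    replace (exp A * RInt (fun t => Rpower t p) a' T')
      with (RInt (fun t => exp A * Rpower t p) a' T')
      by exact (RInt_scal (V := R_CompleteNormedModule) _ _ _ _ Hpow).
    apply RInt_le; [lra | apply Hex; lra | |].
    { apply (ex_RInt_scal (V := R_CompleteNormedModule)), Hpow. }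
    intros t Ht. unfold f. rewrite Rmult_comm.
    apply Rmult_le_compat_r; [left; apply Rpower_pos |].
    apply exp_le_exp_of_le, phi_le. lra.
  - apply Rle_trans with (RInt (fun t => exp (- t / 2)) T' b'); [| apply RInt_exp_half_le; lra].
    apply RInt_le; [lra | apply Hex; lra | |].
    + apply (ex_RInt_continuous (V := R_CompleteNormedModule)). intros t _.
      apply (ex_derive_continuous (fun t => exp (- t / 2))). auto_derive. exact I.
    + intros t Ht. unfold f, Rpower. rewrite <- exp_plus.
      apply exp_le_exp_of_le, phi_tail; unfold T' in Ht; lra.
Qed.

Lemma power_exp_improper_integral :
  exists l, is_RInt_gen (fun t => Rpower t p * exp (phi t)) (at_right 0) (Rbar_locally p_infty) l
            /\ 0 < l.
Proof.
  apply improper_integral_of_bounded with (exp A * (Rpower (T + 1) (p + 1) / (p + 1)) + 2).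
  - exact continuous_power_exp.
  - intros t _. apply Rmult_lt_0_compat; [apply Rpower_pos | apply exp_pos].
  - exact RInt_power_exp_le.
Qed.

End PowerTimesExp.

Lemma Gamma_fun_pos s : 0 < s -> 0 < Gamma_fun s.
Proof.
  intros hs. set (q := Rabs (s - 1)).
  (* For [t >= 16 q^2 + 1]: [(s - 1) ln t <= 2 q sqrt t <= t / 2]. *)
  assert (Hq : 0 <= q) by apply Rabs_pos.
  destruct (power_exp_improper_integral (s - 1) 0 (16 * q ^ 2 + 1) (fun t => - t))
    as [l [Hl Hpos]]; [lra | | | nra | |].
  - intros t. apply (ex_derive_continuous (fun t => - t)). auto_derive. exact I.
  - intros t Ht. lra.
  - intros t Ht _.
    assert (Hst : sqrt t * sqrt t = t) by (apply sqrt_sqrt; nra).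
    assert (Hs : 0 <= sqrt t) by apply sqrt_pos.
    assert (Hs4 : 4 * q <= sqrt t) by nra.
    assert ((s - 1) * ln t <= q * ln t).
    { apply Rmult_le_compat_r; [apply ln_nonneg; nra | apply Rle_abs]. }
    assert (q * ln t <= q * (2 * sqrt t))
      by (apply Rmult_le_compat_l; [lra | apply ln_le_2_sqrt; nra]).
    nra.
  - unfold Gamma_fun. rewrite (is_RInt_gen_unique _ _ Hl). exact Hpos.
Qed.

Definition pc_kernel (p z t : R) : R := Rpower t p * exp (- t ^ 2 / 2 - z * t).

Definition pc_integral (p z : R) : R :=
  RInt_gen (pc_kernel p z) (at_right 0) (Rbar_locally p_infty).

Lemma pc_kernel_improper_integral p z : -1 < p ->
  exists l, is_RInt_gen (pc_kernel p z) (at_right 0) (Rbar_locally p_infty) l /\ 0 < l.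
Proof.
  intros hp.
  apply (power_exp_improper_integral p (z ^ 2 / 2) (2 * Rabs p + 2 * Rabs z + 2)).
  - exact hp.
  - intros t. apply (ex_derive_continuous (fun t => - t ^ 2 / 2 - z * t)). auto_derive. exact I.
  - intros t _. pose proof (pow2_ge_0 (t + z)). nra.
  - pose proof (Rabs_pos p). pose proof (Rabs_pos z). lra.
  - intros t Ht _. pose proof (Rabs_pos p). pose proof (Rabs_pos z).
    assert (Hln : 0 <= ln t <= t) by (split; [apply ln_nonneg | pose proof (ln_le_sub_1 t)]; lra).
    assert (p * ln t <= Rabs p * t).
    { apply Rle_trans with (Rabs p * ln t); [apply Rmult_le_compat_r; [lra | apply Rle_abs] |].
      apply Rmult_le_compat_l; lra. }
    assert (- z * t <= Rabs z * t).
    { apply Rmult_le_compat_r; [lra |]. rewrite <- Rabs_Ropp. apply Rle_abs. }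
    nra.
Qed.

Lemma pc_integral_correct p z : -1 < p ->
  is_RInt_gen (pc_kernel p z) (at_right 0) (Rbar_locally p_infty) (pc_integral p z).
Proof.
  intros hp. destruct (pc_kernel_improper_integral p z hp) as [l [Hl _]].
  unfold pc_integral. rewrite (is_RInt_gen_unique _ _ Hl). exact Hl.
Qed.

Lemma pc_integral_pos p z : -1 < p -> 0 < pc_integral p z.
Proof.
  intros hp. destruct (pc_kernel_improper_integral p z hp) as [l [Hl Hpos]].
  unfold pc_integral. rewrite (is_RInt_gen_unique _ _ Hl). exact Hpos.
Qed.

Lemma Rabs_exp_sub_taylor1_le x : Rabs (exp x - 1 - x) <= x ^ 2 * exp (Rabs x).
Proof.
  pose proof (exp_ineq1_le x). pose proof (exp_ineq1_le (- x)).
  pose proof (exp_pos x). pose proof (exp_pos (- x)).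
  assert (Hinv : exp x * exp (- x) = 1) by (rewrite <- exp_plus, Rplus_opp_r; apply exp_0).
  assert (exp x - 1 - x <= x * (exp x - 1)).
  { assert (exp x * (1 - x) <= 1) by (rewrite <- Hinv; apply Rmult_le_compat_l; lra). nra. }
  rewrite Rabs_right by lra.
  destruct (Rle_or_lt 0 x) as [Hx | Hx].
  - rewrite Rabs_right by lra. nra.
  - rewrite Rabs_left by lra.
    assert (1 <= exp (- x)) by (rewrite <- exp_0; apply exp_le_exp_of_le; lra).
    nra.
Qed.

(* Factor out [pc_kernel p z t]: the three kernels are it times [e^(-h t)], [t] and [t^2 e^t]. *)
Lemma pc_kernel_taylor p z h t : 0 < t -> Rabs h <= 1 ->
  Rabs (pc_kernel p (z + h) t - pc_kernel p z t + h * pc_kernel (p + 1) z t)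
    <= h ^ 2 * pc_kernel (p + 2) (z - 1) t.
Proof.
  intros Ht Hh. unfold pc_kernel.
  set (k := Rpower t p * exp (- t ^ 2 / 2 - z * t)).
  assert (Hk : 0 < k) by (apply Rmult_lt_0_compat; [apply Rpower_pos | apply exp_pos]).
  replace (Rpower t p * exp (- t ^ 2 / 2 - (z + h) * t)) with (k * exp (- h * t))
    by (unfold k; rewrite Rmult_assoc, <- exp_plus; do 2 f_equal; ring).
  replace (Rpower t (p + 1) * exp (- t ^ 2 / 2 - z * t)) with (k * t)
    by (unfold k; rewrite Rpower_plus, Rpower_1 by exact Ht; ring).
  replace (Rpower t (p + 2) * exp (- t ^ 2 / 2 - (z - 1) * t)) with (k * (t ^ 2 * exp t)).
  2:{ unfold k. replace (p + 2) with (p + 1 + 1) by ring.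
      rewrite !Rpower_plus, Rpower_1 by exact Ht.
      replace (- t ^ 2 / 2 - (z - 1) * t) with (- t ^ 2 / 2 - z * t + t) by ring.
      rewrite exp_plus. ring. }
  replace (k * exp (- h * t) - k + h * (k * t)) with (k * (exp (- h * t) - 1 - - h * t)) by ring.
  rewrite Rabs_mult, (Rabs_right k) by lra.
  replace (h ^ 2 * (k * (t ^ 2 * exp t))) with (k * ((- h * t) ^ 2 * exp t)) by ring.
  apply Rmult_le_compat_l; [lra |].
  apply Rle_trans with ((- h * t) ^ 2 * exp (Rabs (- h * t))); [apply Rabs_exp_sub_taylor1_le |].
  apply Rmult_le_compat_l; [apply pow2_ge_0 |].
  apply exp_le_exp_of_le. rewrite Rabs_mult, Rabs_Ropp, (Rabs_right t) by lra. nra.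
Qed.

Lemma pc_integral_taylor p z h : -1 < p -> Rabs h <= 1 ->
  Rabs (pc_integral p (z + h) - pc_integral p z + h * pc_integral (p + 1) z)
    <= h ^ 2 * pc_integral (p + 2) (z - 1).
Proof.
  intros hp Hh.
  assert (Hinside := eventually_inside_half_line 1 1 Rlt_0_1).
  assert (I1 := pc_integral_correct p (z + h) hp).
  assert (I2 := pc_integral_correct p z hp).
  assert (I3 := pc_integral_correct (p + 1) z ltac:(lra)).
  assert (I4 := pc_integral_correct (p + 2) (z - 1) ltac:(lra)).
  refine (RInt_gen_norm _ _ _ _ _ _
    (is_RInt_gen_plus _ _ _ _ (is_RInt_gen_minus _ _ _ _ I1 I2) (is_RInt_gen_scal _ h _ I3))
    (is_RInt_gen_scal _ (h ^ 2) _ I4)).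
  - revert Hinside. apply filter_imp. intros [a b] [[Ha Ha1] Hb]. simpl in *. lra.
  - revert Hinside. apply filter_imp. intros [a b] [[Ha Ha1] Hb] t Ht.
    apply pc_kernel_taylor; simpl in *; lra.
Qed.

Lemma is_derive_of_quadratic_remainder (F : R -> R) z l M :
  (forall h, Rabs h <= 1 -> Rabs (F (z + h) - F z - h * l) <= h ^ 2 * M) ->
  is_derive F z l.
Proof.
  intros HF. apply is_derive_Reals. intros eps Heps.
  set (M' := Rabs M + 1).
  assert (HM' : 0 < M') by (unfold M'; pose proof (Rabs_pos M); lra).
  assert (Hdelta : 0 < Rmin 1 (eps / M'))
    by (apply Rmin_glb_lt; [lra | apply Rdiv_lt_0_compat; lra]).
  exists (mkposreal _ Hdelta). intros h Hh0 Hh. simpl in Hh.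
  assert (Hh1 : Rabs h <= 1) by (pose proof (Rmin_l 1 (eps / M')); lra).
  assert (Hheps : Rabs h * M' < eps).
  { pose proof (Rmin_r 1 (eps / M')).
    apply Rmult_lt_reg_r with (/ M'); [apply Rinv_0_lt_compat, HM' |].
    rewrite Rmult_assoc, Rinv_r by lra. unfold Rdiv in *. lra. }
  assert (Habs : 0 < Rabs h) by (apply Rabs_pos_lt, Hh0).
  replace ((F (z + h) - F z) / h - l) with ((F (z + h) - F z - h * l) / h) by (field; exact Hh0).
  unfold Rdiv. rewrite Rabs_mult, Rabs_inv.
  apply Rle_lt_trans with (h ^ 2 * M * / Rabs h).
  { apply Rmult_le_compat_r; [left; apply Rinv_0_lt_compat, Habs | apply HF, Hh1]. }
  replace (h ^ 2 * M * / Rabs h) with (M * Rabs h)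
    by (rewrite <- (pow2_abs h); field; lra).
  pose proof (Rle_abs M). unfold M' in Hheps. nra.
Qed.

Lemma is_derive_pc_integral p z : -1 < p ->
  is_derive (pc_integral p) z (- pc_integral (p + 1) z).
Proof.
  intros hp. apply is_derive_of_quadratic_remainder with (pc_integral (p + 2) (z - 1)).
  intros h Hh.
  replace (pc_integral p (z + h) - pc_integral p z - h * - pc_integral (p + 1) z)
    with (pc_integral p (z + h) - pc_integral p z + h * pc_integral (p + 1) z) by ring.
  apply pc_integral_taylor; assumption.
Qed.

Section AffineComposition.
Variables (p lam C : R) (u : R -> R).
Hypothesis hp : -1 < p.
Hypothesis u_derive : forall x, is_derive u x (- lam).

Lemma is_derive_pc_integral_comp n x :
  is_derive (fun y => C * lam ^ n * pc_integral (p + INR n) (u y)) x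
    (C * lam ^ S n * pc_integral (p + INR (S n)) (u x)).
Proof.
  assert (hpn : -1 < p + INR n) by (pose proof (pos_INR n); lra).
  pose proof (is_derive_comp _ _ x _ _ (is_derive_pc_integral _ (u x) hpn) (u_derive x)) as Hcomp.
  pose proof (is_derive_scal _ x (C * lam ^ n) _ Hcomp) as H.
  rewrite S_INR, <- Rplus_assoc.
  replace (C * lam ^ S n * pc_integral (p + INR n + 1) (u x))
    with (C * lam ^ n * ((- lam) * - pc_integral (p + INR n + 1) (u x))) by (simpl; ring).
  exact H.
Qed.

Lemma Derive_n_pc_integral_comp n x :
  Derive_n (fun y => C * pc_integral p (u y)) n x
    = C * lam ^ n * pc_integral (p + INR n) (u x).
Proof.
  revert x; induction n as [| n IH]; intros x.
  - simpl. rewrite Rplus_0_r. ring.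
  - simpl Derive_n. rewrite (Derive_ext _ _ x IH).
    apply is_derive_unique, is_derive_pc_integral_comp.
Qed.

End AffineComposition.

Section Psi.
Variables a b sigma rho : R.
Hypotheses (hb : 0 < b) (hsigma : 0 < sigma) (hrho : 0 < rho).

Let rho_div_b_pos : 0 < rho / b := Rdiv_lt_0_compat rho b hrho hb.

Lemma psi_as_pc_integral x :
  psi a b sigma rho x
    = / Gamma_fun (rho / b) * pc_integral (rho / b - 1) (sqrt (2 * b) / sigma * (a / b - x)).
Proof.
  unfold psi, D_pc.
  replace (- (- rho / b)) with (rho / b) by (field; lra).
  set (z := - (b * x - a) / (sigma * b) * sqrt (2 * b)).
  replace z with (sqrt (2 * b) / sigma * (a / b - x)) by (unfold z; field; lra).
  set (w := sqrt (2 * b) / sigma * (a / b - x)).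
  change (RInt_gen (fun t => Rpower t (rho / b - 1) * exp (- t ^ 2 / 2 - w * t))
            (at_right 0) (Rbar_locally p_infty)) with (pc_integral (rho / b - 1) w).
  assert (Hw : w ^ 2 / 4 = (b * x - a) ^ 2 / (2 * sigma ^ 2 * b)).
  { unfold w. replace ((sqrt (2 * b) / sigma * (a / b - x)) ^ 2)
      with (Rsqr (sqrt (2 * b)) * (a / b - x) ^ 2 / sigma ^ 2) by (unfold Rsqr; field; lra).
    rewrite Rsqr_sqrt by lra. field. lra. }
  replace (- w ^ 2 / 4) with (- ((b * x - a) ^ 2 / (2 * sigma ^ 2 * b))) by lra.
  rewrite exp_Ropp. field.
  split; [apply Rgt_not_eq, Gamma_fun_pos, rho_div_b_pos | apply Rgt_not_eq, exp_pos].
Qed.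

Lemma Derive_n_psi n x :
  Derive_n (psi a b sigma rho) n x
    = / Gamma_fun (rho / b) * (sqrt (2 * b) / sigma) ^ n
      * pc_integral (rho / b - 1 + INR n) (sqrt (2 * b) / sigma * (a / b - x)).
Proof.
  rewrite (Derive_n_ext _ _ n x psi_as_pc_integral).
  apply (Derive_n_pc_integral_comp _ (sqrt (2 * b) / sigma) _
           (fun y => sqrt (2 * b) / sigma * (a / b - y))).
  - pose proof rho_div_b_pos. lra.
  - intros y. auto_derive; [exact I | ring].
Qed.

Lemma Derive_n_psi_pos n x : 0 < Derive_n (psi a b sigma rho) n x.
Proof.
  rewrite Derive_n_psi.
  assert (Hlam : 0 < sqrt (2 * b) / sigma) by (apply Rdiv_lt_0_compat; [apply sqrt_lt_R0 |]; lra).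
  apply Rmult_lt_0_compat; [apply Rmult_lt_0_compat |].
  - apply Rinv_0_lt_compat, Gamma_fun_pos, rho_div_b_pos.
  - apply pow_lt, Hlam.
  - apply pc_integral_pos. pose proof rho_div_b_pos. pose proof (pos_INR n). lra.
Qed.

Lemma ex_derive_Derive_n_psi n x : ex_derive (Derive_n (psi a b sigma rho) n) x.
Proof.
  apply (ex_derive_ext (fun y => / Gamma_fun (rho / b) * (sqrt (2 * b) / sigma) ^ n
      * pc_integral (rho / b - 1 + INR n) (sqrt (2 * b) / sigma * (a / b - y)))).
  - intros y. symmetry. apply Derive_n_psi.
  - eexists. apply (is_derive_pc_integral_comp _ (sqrt (2 * b) / sigma) _
                     (fun y => sqrt (2 * b) / sigma * (a / b - y))).
    + pose proof rho_div_b_pos. lra.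
    + intros y. auto_derive; [exact I | ring].
Qed.

End Psi.

Lemma lt_increment_of_lt_derive (g g' : R -> R) x y m :
  (forall t, is_derive g t (g' t)) -> x < y -> (forall t, x < t < y -> m < g' t) ->
  g x + m * (y - x) < g y.
Proof.
  intros Hg Hxy Hm.
  destruct (MVT_cor2 g g' x y Hxy) as [t [Hinc Ht]].
  { intros t _. apply is_derive_Reals, Hg. }
  specialize (Hm t Ht). nra.
Qed.

Lemma eventually_pos_of_derive_gt (g g' : R -> R) x0 m :
  (forall t, is_derive g t (g' t)) -> 0 < m -> (forall t, x0 < t -> m < g' t) ->
  exists y, x0 < y /\ 0 < g y.
Proof.
  intros Hg Hm Hslope.
  assert (Hstep : 0 < (Rabs (g x0) + 1) / m)
    by (apply Rdiv_lt_0_compat; [pose proof (Rabs_pos (g x0)); lra | exact Hm]).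
  exists (x0 + (Rabs (g x0) + 1) / m). split; [lra |].
  assert (Hlt : x0 < x0 + (Rabs (g x0) + 1) / m) by lra.
  pose proof (lt_increment_of_lt_derive g g' _ _ m Hg Hlt (fun t Ht => Hslope t (proj1 Ht))).
  replace (m * (x0 + (Rabs (g x0) + 1) / m - x0)) with (Rabs (g x0) + 1) in * by (field; lra).
  pose proof (Rle_abs (- g x0)). rewrite Rabs_Ropp in *. lra.
Qed.

Lemma exists_unique_root_of_increasing (g : R -> R) c :
  (forall x, continuous g x) -> (forall x x', c <= x -> x < x' -> g x < g x') ->
  g c < 0 -> (exists y, c < y /\ 0 < g y) -> exists! x, c < x /\ g x = 0.
Proof.
  intros Hcont Hinc Hc [y [Hcy Hy]].
  destruct (IVT g c y) as [x [[Hcx Hxy] Hx]]; try assumption.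
  { intros t. apply continuity_pt_filterlim, Hcont. }
  assert (Hcx' : c < x) by (destruct Hcx as [Hlt | <-]; [exact Hlt | lra]).
  exists x. split; [split; assumption |].
  intros x' [Hcx'' Hx'].
  destruct (Rtotal_order x x') as [Hlt | [Heq | Hgt]]; [| exact Heq |].
  - pose proof (Hinc x x' ltac:(lra) Hlt). lra.
  - pose proof (Hinc x' x ltac:(lra) Hgt). lra.
Qed.

(* [g' = (x - c) f_(k+2)] is positive on [(c, oo)] and, since [f_(k+2)] increases,
   exceeds [f_(k+2)(c + 1)] beyond [c + 1]. *)
Lemma tangent_root_unique (f : nat -> R -> R) c k :
  (forall n x, is_derive (f n) x (f (S n) x)) -> (forall n x, 0 < f n x) ->
  exists! x, c < x /\ (x - c) * f (S k) x - f k x = 0.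
Proof.
  intros Hf Hpos.
  set (g x := (x - c) * f (S k) x - f k x).
  assert (Hg : forall x, is_derive g x ((x - c) * f (S (S k)) x)).
  { intros x. unfold g.
    replace ((x - c) * f (S (S k)) x)
      with (1 * f (S k) x + (x - c) * f (S (S k)) x - f (S k) x) by ring.
    apply (is_derive_minus (fun x => (x - c) * f (S k) x)), Hf.
    apply (is_derive_mult (fun x => x - c)); [| apply Hf | exact Rmult_comm].
    auto_derive; [exact I | ring]. }
  assert (Hslope : forall t, c + 1 < t -> f (S (S k)) (c + 1) < (t - c) * f (S (S k)) t).
  { intros t Ht.
    pose proof (lt_increment_of_lt_derive (f (S (S k))) _ (c + 1) t 0 (Hf _) Ht
                  (fun s _ => Hpos _ s)).
    pose proof (Hpos (S (S k)) (c + 1)). nra. }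
  destruct (eventually_pos_of_derive_gt g _ (c + 1) _ Hg (Hpos (S (S k)) (c + 1)) Hslope)
    as [y [Hy Hgy]].
  apply exists_unique_root_of_increasing.
  - intros x. apply (ex_derive_continuous g). eexists. apply Hg.
  - intros x x' Hcx Hxx'. change (g x < g x').
    rewrite <- (Rplus_0_r (g x)), <- (Rmult_0_l (x' - x)).
    apply (lt_increment_of_lt_derive g _ x x' 0 Hg Hxx').
    intros t Ht. apply Rmult_lt_0_compat; [lra | apply Hpos].
  - unfold g. pose proof (Hpos k c). lra.
  - exists y. split; [lra | exact Hgy].
Qed.

Theorem lemma4p4 (a b sigma rho c : R)
  (hb : 0 < b) (hsigma : 0 < sigma) (hrho : 0 < rho) (hc : 0 < c) :
  forall k : nat,
    exists! x : R, c < x /\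
      (x - c) * Derive_n (psi a b sigma rho) (S k) x
        - Derive_n (psi a b sigma rho) k x = 0.
Proof.
  intros k. apply (tangent_root_unique (Derive_n (psi a b sigma rho))).
  - intros n x. apply Derive_correct, ex_derive_Derive_n_psi; assumption.
  - intros n x. apply Derive_n_psi_pos; assumption.
Qed.
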